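(* There is a first-order formula $\Psi_{\mathrm{tran}}(x,y)$ in the language $\{\le,[1]+[1]\}$ such that for all $\sigma,\pi\in\mathcal P$, $$\mathbf Y^*\models\Psi_{\mathrm{tran}}(\sigma,\pi)\iff \pi=[\#\sigma].$$
   Context: $\mathcal P$ is the set of all integer partitions, including the empty partition $\emptyset$; a partition is a nonincreasing finite sequence of positive integers (its parts). $[n]$ denotes the partition with a single part $n$ (with $[0]=\emptyset$), and $m[n]$ the partition with exactly $m$ parts equal to $n$. Every nonempty partition has a unique canonical representation $\sigma=\sum_{i=1}^k m_i[n_i]$ with $n_1>\dots>n_k\ge1$, meaning part $n_i$ occurs exactly $m_i\ge1$ times. Let $p_1=2,p_2=3,p_3=5,\dots$ enumerate the primes. Define $\#:\mathcal P\to\mathbb N$ by $\#\emptyset=0$; $\#(m[1])=p_1^{m-1}$ for $m\ge1$; and $\#\sigma=\prod_{i=1}^k p_{n_i}^{m_i}$ if $\sigma=\sum_{i=1}^k m_i[n_i]$ has some part $n_i\ne1$. (This is a bijection.) Young's lattice $\mathbf Y=\langle\mathcal P,\le\rangle$ has $(s_1,\dots,s_r)\le(n_1,\dots,n_t)$ iff $r\le t$ and $s_i\le n_i$ for all $i\le r$; $\mathbf Y^*$ is $\mathbf Y$ with a constant symbol interpreted as the partition $[1]+[1]=(1,1)$. *)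

From mathcomp Require Import all_boot.
Set Implicit Arguments. Unset Strict Implicit. Unset Printing Implicit Defensive.

Definition is_partition (s : seq nat) : bool :=
  sorted geq s && all (fun x => 0 < x) s.

Record ipartition := IPartition { parts :> seq nat; partsP : is_partition parts }.

Definition young_le (s t : seq nat) : bool :=
  (size s <= size t) && all (fun i => nth 0 s i <= nth 0 t i) (iota 0 (size s)).

(* The constant of Y*: the ipartition [1]+[1] = (1,1). *)
Definition one_one : ipartition.
Proof. by exists [:: 1; 1]. Defined.

(* [n] : single part n, with [0] = empty ipartition (as a sequence). *)
Definition single (n : nat) : seq nat := if n is 0 then [::] else [:: n].

Definition next_prime (m : nat) : nat :=
  ex_minn (P := fun p => (m < p) && prime p)
    (let: exist2 p Hp1 Hp2 := prime_above m in ex_intro _ p (introT andP (conj Hp1 Hp2))).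

(* nth_prime n = p_n for n >= 1 (nth_prime 0 = 1 is a dummy value). *)
Fixpoint nth_prime (n : nat) : nat :=
  if n is k.+1 then next_prime (nth_prime k) else 1.

(* #emptyset = 0; #(m[1]) = 2^(m-1); otherwise prod_i p_{n_i}^{m_i},
   i.e. the product of p_x over all parts x (with multiplicity). *)
Definition hash (s : seq nat) : nat :=
  if s is [::] then 0
  else if all (fun x => x == 1) s then 2 ^ (size s).-1
  else \prod_(x <- s) nth_prime x.

Inductive term : Type :=
| TVar : nat -> term
| TConst : term.

Inductive formula : Type :=
| FLe : term -> term -> formula
| FEq : term -> term -> formula
| FFalse : formula
| FNot : formula -> formula
| FAnd : formula -> formula -> formula
| FOr : formula -> formula -> formula
| FImp : formula -> formula -> formula
| FForall : nat -> formula -> formula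
| FExists : nat -> formula -> formula.

Definition env := nat -> ipartition.

Definition update (e : env) (i : nat) (a : ipartition) : env :=
  fun j => if j == i then a else e j.

Definition eval_term (e : env) (t : term) : ipartition :=
  match t with TVar i => e i | TConst => one_one end.

Fixpoint sat (e : env) (f : formula) : Prop :=
  match f with
  | FLe t1 t2 => young_le (eval_term e t1) (eval_term e t2)
  | FEq t1 t2 => eval_term e t1 = eval_term e t2
  | FFalse => False
  | FNot g => ~ sat e g
  | FAnd g h => sat e g /\ sat e h
  | FOr g h => sat e g \/ sat e h
  | FImp g h => sat e g -> sat e h
  | FForall i g => forall a : ipartition, sat (update e i a) g
  | FExists i g => exists a : ipartition, sat (update e i a) g
  end.

(* A partition is viewed as the nonincreasing sequence of its parts
   [part x 0 >= part x 1 >= ...], and Young's order is the pointwise order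
   (young_leP).  Two families of partitions carry natural numbers:
   - rows  [n]       (part x 1 = 0), carrying the number n = part x 0;
   - columns m[1]    (part x 0 <= 1), carrying the number m = size x.
   Both families are definable from the constant (1,1), and so are the
   successor relations on them.  A partition x then serves as a finite
   sequence of numbers: "the j-th part of x is the row r" is definable using
   the column of length j+1 as an index.  With this coding we define, step by
   step, addition and multiplication of rows, primality, the next-prime map,
   n |-> p_n (by iterating next-prime along a sequence), and finally the
   product of p_x over all parts x of a partition (by recursion along its
   parts).

   Every formula below is built from fresh-variable indices: a combinator
   taking an index m quantifies only over variables >= m, so its meaning is
   stated for free variables below m.  Formulas are locked so that
   simplification never unfolds them; each comes with a lemma sat_* giving
   its meaning. *)
From mathcomp Require Import all_boot zify.
Set Implicit Arguments. Unset Strict Implicit.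

Definition part (x : ipartition) i := nth 0 (parts x) i.

Lemma part_gt0 (x : ipartition) i : (0 < part x i) = (i < size x).
Proof.
case: x => s Hs; case/andP: (Hs) => _ /allP pos; rewrite /part /=.
case: (ltnP i (size s)) => Hi; last by rewrite nth_default.
by apply: pos; rewrite mem_nth.
Qed.

Lemma part_mono (x : ipartition) i j : i <= j -> part x j <= part x i.
Proof.
case: x => s Hs; case/andP: (Hs) => sorted_s _; rewrite /part /= => le_ij.
case: (ltnP j (size s)) => Hj; last by rewrite nth_default.
have geq_trans : transitive (T:=nat) geq by move=> a b c /= H1 H2; apply: leq_trans H2 H1.
by apply: (sorted_leq_nth geq_trans (fun a => leqnn a) 0 sorted_s); rewrite ?inE //=; lia.
Qed.

Lemma young_leP (x y : ipartition) : young_le x y <-> forall i, part x i <= part y i.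
Proof.
rewrite /young_le; split.
- move=> /andP [_ /allP le_xy] i.
  case: (ltnP i (size x)) => Hi; first by apply: le_xy; rewrite mem_iota.
  by rewrite /part nth_default.
- move=> le_xy; apply/andP; split; last by apply/allP => i _; apply: le_xy.
  case: (ltnP (size y) (size x)) => // lt_yx.
  have := le_xy (size x).-1; have := part_gt0 x (size x).-1.
  have := part_gt0 y (size x).-1; lia.
Qed.

Lemma size_of (x : ipartition) k : (forall i, (0 < part x i) = (i < k)) -> size x = k.
Proof.
move=> H; have := H (size x); have := H k; rewrite !part_gt0; lia.
Qed.

Lemma partition_of_fun (g : nat -> nat) L :
  (forall i, i < L -> 0 < g i) -> (forall i, L <= i -> g i = 0) ->
  (forall i, g i.+1 <= g i) -> exists x : ipartition, forall i, part x i = g i.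
Proof.
move=> pos zero mono.
have Hp : is_partition (mkseq g L).
  apply/andP; split.
  - apply/(sortedP 0) => i; rewrite size_mkseq => Hi.
    by rewrite !nth_mkseq //; [apply: mono | lia].
  - apply/allP => y /mapP [i]; rewrite mem_iota => /andP [_ Hi] ->; apply: pos; lia.
exists (IPartition Hp) => i; rewrite /part /=.
case: (ltnP i L) => Hi; first by rewrite nth_mkseq.
by rewrite nth_default ?size_mkseq // zero.
Qed.

Lemma part_one_one i : part one_one i = (i < 2).
Proof. by case: i => [|[|i]]; rewrite /part /one_one /= ?nth_nil. Qed.

Lemma row_exists n : exists x : ipartition, forall i, part x i = if i == 0 then n else 0.
Proof.
apply: (@partition_of_fun (fun i => if i == 0 then n else 0) (n > 0)) => -[|i] /=; lia.
Qed.

Lemma column_exists k : exists x : ipartition, forall i, part x i = (i < k).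
Proof. by apply: (@partition_of_fun (fun i => i < k) k) => i; lia. Qed.

Lemma size_column (x : ipartition) k : (forall i, part x i = (i < k)) -> size x = k.
Proof. by move=> Hx; apply: size_of => i; rewrite Hx; lia. Qed.

Lemma part_row (x : ipartition) i : part x 1 = 0 -> 0 < i -> part x i = 0.
Proof. move=> H Hi; have := part_mono x Hi; lia. Qed.

Lemma part_column (x : ipartition) i : part x 0 <= 1 -> part x i = (i < size x).
Proof. move=> H; have := part_mono x (leq0n i); have := part_gt0 x i; lia. Qed.

Lemma le_row (x y : ipartition) :
  part x 1 = 0 -> (forall i, part x i <= part y i) <-> part x 0 <= part y 0.
Proof. by move=> H; split => [/(_ 0) // | H0 [|i] //]; rewrite part_row. Qed.

Lemma below_row (x y : ipartition) : part y 1 = 0 ->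
  (forall i, part x i <= part y i) -> part x 1 = 0 /\ part x 0 <= part y 0.
Proof. by move=> Hy H; split; [have := H 1; rewrite Hy; lia | exact: H]. Qed.

Lemma le_column (x y : ipartition) :
  part x 0 <= 1 -> (forall i, part x i <= part y i) <-> size x <= size y.
Proof.
move=> H; split.
- move=> le_xy; case: (ltnP (size y) (size x)) => // lt_yx.
  have := le_xy (size x).-1; rewrite (part_column _ H); have := part_gt0 y (size x).-1; lia.
- by move=> le_s i; rewrite (part_column _ H); have := part_gt0 y i; lia.
Qed.

Lemma below_column (x y : ipartition) : part y 0 <= 1 ->
  (forall i, part x i <= part y i) -> part x 0 <= 1 /\ size x <= size y.
Proof.
move=> Hy H; have Hx : part x 0 <= 1 by have := H 0; lia.
by split => //; apply/le_column.
Qed.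

Arguments update : simpl never.
Arguments young_le : simpl never.

Lemma update_eq (e : env) i a : update e i a i = a.
Proof. by rewrite /update eqxx. Qed.
Lemma update_neq (e : env) i a j : j != i -> update e i a j = e j.
Proof. by rewrite /update => /negPf ->. Qed.

(* Evaluate all variable lookups in updated environments; variable indices
   are concrete offsets of a base index, so lia separates them. *)
Ltac upd := repeat (rewrite update_eq || (rewrite update_neq; last by apply/eqP; lia)).
#[local] Hint Extern 0 (is_true (_ < _)) => (by lia) : core.

Notation "n .+5" := (n.+4.+1) (at level 1, left associativity, format "n .+5") : nat_scope.
Notation "n .+6" := (n.+5.+1) (at level 1, left associativity, format "n .+6") : nat_scope.

Definition fLe a b := locked (FLe (TVar a) (TVar b)).
Lemma sat_Le e a b : sat e (fLe a b) <-> forall i, part (e a) i <= part (e b) i.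
Proof. rewrite /fLe -lock; exact: young_leP. Qed.

Definition fLeOneOne a := locked (FLe (TVar a) TConst).
Lemma sat_LeOneOne e a : sat e (fLeOneOne a) <-> forall i, part (e a) i <= (i < 2).
Proof.
rewrite /fLeOneOne -lock /=; change [:: 1; 1] with (parts one_one); rewrite young_leP.
by split => H i; have := H i; rewrite part_one_one.
Qed.

Definition fIsRow a := locked (FNot (FLe TConst (TVar a))).
Lemma sat_IsRow e a : sat e (fIsRow a) <-> part (e a) 1 = 0.
Proof.
rewrite /fIsRow -lock /=; change [:: 1; 1] with (parts one_one); rewrite young_leP; split.
- move=> H; case E: (part (e a) 1) => [//|k]; exfalso; apply: H => i.
  rewrite part_one_one; have := part_mono (e a) (leq0n 1); case: i => [|[|i]] /=; lia.
- by move=> H0 H; have := H 1; rewrite part_one_one H0.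
Qed.

Definition fIsEmpty a m := locked (FForall m (fLe a m)).
Lemma sat_IsEmpty e a m : a < m -> sat e (fIsEmpty a m) <-> part (e a) 0 = 0.
Proof.
move=> Ha; rewrite /fIsEmpty -lock /=; split.
- move=> H; have [y Hy] := column_exists 0.
  by have := H y; rewrite sat_Le; upd => /(_ 0); rewrite Hy; lia.
- move=> H0 y; rewrite sat_Le; upd => i; have := part_mono (e a) (leq0n i); lia.
Qed.

Definition fIsColumn a m := locked (FForall m (FImp (FAnd (fIsRow m) (fLe m a)) (fLeOneOne m))).
Lemma sat_IsColumn e a m : a < m -> sat e (fIsColumn a m) <-> part (e a) 0 <= 1.
Proof.
move=> Ha; rewrite /fIsColumn -lock /=; split.
- move=> H; have [y Hy] := row_exists (part (e a) 0).
  have := H y; rewrite sat_IsRow sat_Le sat_LeOneOne; upd.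
  rewrite Hy => /(_ _) /(_ 0); rewrite Hy; apply; split => // i.
  by rewrite Hy; case: i => //= i; lia.
- move=> H0 y; rewrite sat_IsRow sat_Le sat_LeOneOne; upd => -[H1 H2] [|[|i]] /=.
  + by have := H2 0; lia.
  + by rewrite H1.
  + by rewrite part_row.
Qed.

Definition fRowSucc a b m := locked (FAnd (fIsRow a) (FAnd (fIsRow b) (FAnd (fLe a b)
  (FAnd (FNot (fLe b a)) (FForall m (FImp (fLe m b) (FImp (FNot (fLe m a)) (fLe b m)))))))).
Lemma sat_RowSucc e a b m : a < m -> b < m ->
  sat e (fRowSucc a b m) <->
  [/\ part (e a) 1 = 0, part (e b) 1 = 0 & part (e b) 0 = (part (e a) 0).+1].
Proof.
move=> Ha Hb; rewrite /fRowSucc -lock /= !sat_IsRow !sat_Le; split.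
- move=> [Ra [Rb [Hab [Hba H]]]]; rewrite (le_row _ Ra) in Hab; rewrite (le_row _ Rb) in Hba.
  have [y Hy] := row_exists (part (e a) 0).+1; have Ry : part y 1 = 0 by rewrite Hy.
  have := H y; rewrite !sat_Le; upd; rewrite !(le_row _ Ry) (le_row _ Rb) Hy /= => H'.
  split => //; have : part (e b) 0 <= (part (e a) 0).+1 by apply: H'; lia.
  lia.
- move=> [Ra Rb Hs]; rewrite (le_row _ Ra) (le_row _ Rb); do 4 (split; first lia).
  move=> y; rewrite !sat_Le; upd => Hyb; have [Ry _] := below_row Rb Hyb.
  rewrite (le_row _ Ry) (le_row _ Rb) => Hya; lia.
Qed.

Definition fColumnSucc a b m := locked (FAnd (fIsColumn a m) (FAnd (fIsColumn b m) (FAnd (fLe a b)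
  (FAnd (FNot (fLe b a)) (FForall m (FImp (fLe m b) (FImp (FNot (fLe m a)) (fLe b m)))))))).
Lemma sat_ColumnSucc e a b m : a < m -> b < m ->
  sat e (fColumnSucc a b m) <->
  [/\ part (e a) 0 <= 1, part (e b) 0 <= 1 & size (e b) = (size (e a)).+1].
Proof.
move=> Ha Hb; rewrite /fColumnSucc -lock /= !sat_IsColumn // !sat_Le; split.
- move=> [Ca [Cb [Hab [Hba H]]]]; rewrite (le_column _ Ca) in Hab.
  rewrite (le_column _ Cb) in Hba.
  have [y Hy] := column_exists (size (e a)).+1; have Sy := size_column Hy.
  have Cy : part y 0 <= 1 by rewrite Hy.
  have := H y; rewrite !sat_Le; upd; rewrite (le_column _ Cb) !(le_column _ Cy) Sy => H'.
  split => //; have : size (e b) <= (size (e a)).+1 by apply: H'; lia.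
  lia.
- move=> [Ca Cb Hs]; rewrite (le_column _ Ca) (le_column _ Cb); do 4 (split; first lia).
  move=> y; rewrite !sat_Le; upd => Hyb; have [Cy _] := below_column Cb Hyb.
  rewrite (le_column _ Cy) (le_column _ Cb) => Hya; lia.
Qed.

Definition fFirstRow x r m := locked (FAnd (fIsRow r) (FAnd (fLe r x)
   (FForall m (FImp (fIsRow m) (FImp (fLe m x) (fLe m r)))))).
Lemma sat_FirstRow e x r m : x < m -> r < m ->
  sat e (fFirstRow x r m) <-> part (e r) 1 = 0 /\ part (e r) 0 = part (e x) 0.
Proof.
move=> Hx Hr; rewrite /fFirstRow -lock /= !sat_IsRow !sat_Le; split.
- move=> [Rr [Hrx H]]; rewrite (le_row _ Rr) in Hrx.
  have [y Hy] := row_exists (part (e x) 0); have Ry : part y 1 = 0 by rewrite Hy.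
  have Hy0 : part y 0 = part (e x) 0 by rewrite Hy.
  have := H y; rewrite !sat_IsRow !sat_Le; upd; rewrite !(le_row _ Ry) Hy0 => H'.
  by split => //; have := H' Ry (leqnn _); lia.
- move=> [Rr Hs]; rewrite (le_row _ Rr) Hs; split => //; split => // y.
  by rewrite !sat_IsRow !sat_Le; upd => Ry; rewrite !(le_row _ Ry); lia.
Qed.

Definition fLengthColumn x c m := locked (FAnd (fIsColumn c m) (FAnd (fLe c x)
   (FForall m (FImp (fIsColumn m m.+1) (FImp (fLe m x) (fLe m c)))))).
Lemma sat_LengthColumn e x c m : x < m -> c < m ->
  sat e (fLengthColumn x c m) <-> part (e c) 0 <= 1 /\ size (e c) = size (e x).
Proof.
move=> Hx Hc; rewrite /fLengthColumn -lock /= !sat_IsColumn // !sat_Le; split.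
- move=> [Cc [Hcx H]]; rewrite (le_column _ Cc) in Hcx.
  have [y Hy] := column_exists (size (e x)); have Sy := size_column Hy.
  have Cy : part y 0 <= 1 by rewrite Hy; lia.
  have := H y; rewrite !sat_IsColumn // !sat_Le; upd; rewrite !(le_column _ Cy) Sy => H'.
  by split => //; have := H' Cy (leqnn _); lia.
- move=> [Cc Hs]; rewrite (le_column _ Cc) Hs; split => //; split => // y.
  by rewrite !sat_IsColumn // !sat_Le; upd => Cy; rewrite !(le_column _ Cy); lia.
Qed.

Definition fInRectangle z r c m := locked (FAnd
  (FForall m (FImp (fIsRow m) (FImp (fLe m z) (fLe m r))))
  (FForall m (FImp (fIsColumn m m.+1) (FImp (fLe m z) (fLe m c))))).
Lemma sat_InRectangle (e : env) z r c m : z < m -> r < m -> c < m ->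
  sat e (fInRectangle z r c m) <->
  part (e z) 0 <= part (e r) 0 /\ size (e z) <= size (e c).
Proof.
move=> Hz Hr Hc; rewrite /fInRectangle -lock /=; split.
- move=> [H1 H2]; split.
  + have [y Hy] := row_exists (part (e z) 0); have Ry : part y 1 = 0 by rewrite Hy.
    have Hy0 : part y 0 = part (e z) 0 by rewrite Hy.
    have := H1 y; rewrite !sat_IsRow !sat_Le; upd; rewrite !(le_row _ Ry) Hy0 => H'.
    exact: H' Ry (leqnn _).
  + have [y Hy] := column_exists (size (e z)); have Sy := size_column Hy.
    have Cy : part y 0 <= 1 by rewrite Hy; lia.
    have := H2 y; rewrite !sat_IsColumn // !sat_Le; upd; rewrite !(le_column _ Cy) Sy => H'.
    exact: H' Cy (leqnn _).
- move=> [H1 H2]; split => y.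
  + by rewrite !sat_IsRow !sat_Le; upd => Ry; rewrite !(le_row _ Ry); lia.
  + by rewrite !sat_IsColumn // !sat_Le; upd => Cy; rewrite !(le_column _ Cy); lia.
Qed.

Lemma rectangle_exists n k : exists x : ipartition, forall i, part x i = if i < k then n else 0.
Proof.
apply: (@partition_of_fun (fun i => if i < k then n else 0) (if n == 0 then 0 else k)) => i.
- by case: (n =P 0) => [->//|/eqP]; case: ifP => //; lia.
- by case: (n =P 0) => [->|_]; [case: ifP | move=> H; rewrite ltnNge H].
- by case: ifP; case: ifP => //; lia.
Qed.

Definition fPartsAtLeast x c r m := locked (FForall m (FImp (fInRectangle m r c m.+1) (fLe m x))).
Lemma sat_PartsAtLeast (e : env) x c r m : x < m -> r < m -> c < m ->
  sat e (fPartsAtLeast x c r m) <-> forall i, i < size (e c) -> part (e r) 0 <= part (e x) i.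
Proof.
move=> Hx Hr Hc; rewrite /fPartsAtLeast -lock /=; split.
- move=> H i Hi; have [z Hz] := rectangle_exists (part (e r) 0) (size (e c)).
  have := H z; rewrite sat_InRectangle // sat_Le; upd => H'.
  have := H' _ i; rewrite !Hz Hi; apply; split; first by case: ifP.
  case: (ltnP (size (e c)) (size z)) => // lt_cz.
  have := part_gt0 z (size z).-1; rewrite Hz; have -> : (size z).-1 < size z by lia.
  by have -> : (size z).-1 < size (e c) = false by lia.
- move=> H z; rewrite sat_InRectangle // sat_Le; upd => -[H1 H2] i.
  case: (ltnP i (size z)) => Hi; last by rewrite /part nth_default.
  by have := part_mono z (leq0n i); have := H i; lia.
Qed.

Lemma bound_first_parts (x : ipartition) k n : 0 < k ->
  (forall i, i < k -> n <= part x i) <-> n <= part x k.-1.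
Proof.
move=> Hk; split => [H | H i Hi]; first by apply: H; lia.
have : i <= k.-1 by lia.
by move/(part_mono x); lia.
Qed.

Definition fPartAt x c r m := locked (FAnd (fIsRow r) (FAnd (fPartsAtLeast x c r m)
  (FForall m (FImp (fRowSucc r m m.+1) (FNot (fPartsAtLeast x c m m.+1)))))).
Lemma sat_PartAt (e : env) x c r m : x < m -> r < m -> c < m -> 0 < size (e c) ->
  sat e (fPartAt x c r m) <-> part (e r) 1 = 0 /\ part (e x) (size (e c)).-1 = part (e r) 0.
Proof.
move=> Hx Hr Hc Hk.
rewrite /fPartAt -lock /= sat_IsRow sat_PartsAtLeast // bound_first_parts //; split.
- move=> [Rr [H1 H2]]; split => //.
  have [y Hy] := row_exists (part (e r) 0).+1.
  have := H2 y; rewrite sat_RowSucc // sat_PartsAtLeast //; upd.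
  rewrite bound_first_parts // !Hy /= => H'.
  suff : ~ (part (e r) 0).+1 <= part (e x) (size (e c)).-1 by lia.
  by apply: H'; split.
- move=> [Rr Heq]; split => //; split; first lia.
  move=> y; rewrite sat_RowSucc // sat_PartsAtLeast //; upd.
  by rewrite bound_first_parts // => -[_ _ ->]; lia.
Qed.

Definition fIff f g := FAnd (FImp f g) (FImp g f).

(* x is a staircase (n, n-1, ..., 1): each part is one less than the
   previous, tested through fPartsAtLeast at consecutive indices. *)
Definition fStaircase x m := locked (FForall m (FForall m.+1 (FForall m.+2 (FForall m.+3
  (FImp (fColumnSucc m m.+1 m.+4) (FImp (FNot (fIsEmpty m m.+4))
  (FImp (fRowSucc m.+2 m.+3 m.+4) (FImp (FNot (fIsEmpty m.+2 m.+4))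
   (fIff (fPartsAtLeast x m.+1 m.+2 m.+4) (fPartsAtLeast x m m.+3 m.+4)))))))))).
Lemma sat_Staircase (e : env) x m : x < m ->
  sat e (fStaircase x m) <-> forall i, part (e x) i = part (e x) 0 - i.
Proof.
move=> Hx; rewrite /fStaircase -lock /=; split.
- move=> H.
  have step j : part (e x) j.+1 = part (e x) j - 1.
    have shift n : 0 < n -> (n <= part (e x) j.+1 <-> n.+1 <= part (e x) j).
      move=> Hn.
      have [c Hc] := column_exists j.+1; have [c' Hc'] := column_exists j.+2.
      have [r Hr] := row_exists n; have [r' Hr'] := row_exists n.+1.
      have := H c c' r r'.
      rewrite sat_ColumnSucc // sat_RowSucc // !sat_IsEmpty // !sat_PartsAtLeast //; upd.
      rewrite !bound_first_parts ?(size_column Hc) ?(size_column Hc') // !Hc !Hc' !Hr !Hr' /=.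
      move=> H'; have Hn0 : n <> 0 by lia.
      have [A B] := H' (And3 isT isT erefl) ltac:(done) (And3 erefl erefl erefl) Hn0.
      by split.
    case E: (part (e x) j.+1) => [|u].
    + case E2: (part (e x) j) => [|[|w]] //.
      by have := shift w.+1 isT; rewrite E E2; lia.
    + have [A _] := shift u.+1 isT; rewrite E in A; have H1 := A (leqnn _).
      have [_ B] := shift (part (e x) j).-1 ltac:(lia); rewrite E in B.
      by have := B ltac:(lia); lia.
  by elim=> [|i IH]; [rewrite subn0 | rewrite step IH; lia].
- move=> H c c' r r'.
  rewrite sat_ColumnSucc // sat_RowSucc // !sat_IsEmpty // !sat_PartsAtLeast //; upd.
  move=> [Cc Cc' Sc] Zc [Rr Rr' Sr] Zr.
  have Hk : 0 < size c by have := part_gt0 c 0; lia.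
  rewrite !bound_first_parts ?Sc //=.
  by have := H (size c); have := H (size c).-1; rewrite Sr; lia.
Qed.

Lemma staircase_exists n : exists x : ipartition, forall i, part x i = n - i.
Proof. by apply: (@partition_of_fun (fun i => n - i) n) => i; lia. Qed.

(* The row r and the column c carry the same number, i.e. [n] and n[1];
   they are linked by the staircase (n, ..., 1) of first part n and length n. *)
Definition fRowColumn r c m := locked (FExists m (FAnd (fStaircase m m.+1)
  (FAnd (fFirstRow m r m.+1) (fLengthColumn m c m.+1)))).
Lemma sat_RowColumn (e : env) r c m : r < m -> c < m ->
  sat e (fRowColumn r c m) <->
  [/\ part (e r) 1 = 0, part (e c) 0 <= 1 & size (e c) = part (e r) 0].
Proof.
move=> Hr Hc; rewrite /fRowColumn -lock /=; split.
- move=> [x]; rewrite sat_Staircase // sat_FirstRow // sat_LengthColumn //; upd.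
  move=> [Hs [[Rr Hf] [Cc Sc]]]; split => //; rewrite Sc Hf.
  by apply: size_of => i; rewrite Hs; lia.
- move=> [Rr Cc Sc]; have [x Hx] := staircase_exists (part (e r) 0); exists x.
  rewrite sat_Staircase // sat_FirstRow // sat_LengthColumn //; upd.
  have Sx : size x = part (e r) 0 by apply: size_of => i; rewrite Hx; lia.
  split; first by move=> i; rewrite !Hx; lia.
  by rewrite Hx Sx subn0.
Qed.

(* Addition of rows: c = a + b, read off from the staircase x of first part
   c, whose part number b is a. *)
Definition fAdd a b c m := locked (FAnd (fIsRow a) (FAnd (fLe b c)
  (FExists m (FExists m.+1 (FExists m.+2 (FAnd (fStaircase m m.+3) (FAnd (fFirstRow m c m.+3)
    (FAnd (fRowColumn b m.+1 m.+3) (FAnd (fColumnSucc m.+1 m.+2 m.+3) (fPartAt m m.+2 a m.+3)))))))))).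
Lemma sat_Add (e : env) a b c m : a < m -> b < m -> c < m ->
  sat e (fAdd a b c m) <->
  [/\ part (e a) 1 = 0, part (e b) 1 = 0, part (e c) 1 = 0
    & part (e c) 0 = part (e a) 0 + part (e b) 0].
Proof.
move=> Ha Hb Hc; rewrite /fAdd -lock /= sat_IsRow sat_Le; split.
- move=> [Ra [Hbc [x [C [C']]]]].
  rewrite sat_Staircase // sat_FirstRow // sat_RowColumn // sat_ColumnSucc //; upd.
  move=> [Hs [[Rc Hf] [[Rb CC SC] [[_ CC' SC'] HP]]]].
  move: HP; rewrite sat_PartAt //; upd; last by rewrite SC'.
  move=> [_ HP]; rewrite SC' SC /= Hs -Hf in HP.
  by rewrite (le_row _ Rb) in Hbc; split => //; lia.
- move=> [Ra Rb Rc Hs]; rewrite (le_row _ Rb); split => //; split; first lia.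
  have [x Hx] := staircase_exists (part (e c) 0).
  have [C HC] := column_exists (part (e b) 0); have SC := size_column HC.
  have [C' HC'] := column_exists (part (e b) 0).+1; have SC' := size_column HC'.
  exists x, C, C'.
  rewrite sat_Staircase // sat_FirstRow // sat_RowColumn // sat_ColumnSucc //; upd.
  rewrite sat_PartAt //; upd; last by rewrite SC'.
  split; first by move=> i; rewrite !Hx subn0.
  rewrite Hx subn0; split => //.
  split; first by rewrite HC; split => //; lia.
  split; first by rewrite HC HC'; split => //; lia.
  by split => //; rewrite SC' Hx /=; lia.
Qed.

(* Iteration of a strictly inflationary map g from 0, along the parts of a
   witness x = (g^n(0), g^(n-1)(0), ..., g(0)).  The formula step, in the
   variables m+5 (a part of x) and m+4 (the previous part), must define the
   graph of g on rows; fIterate step n p m then says p = [g^n(0)] for the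
   row n.  Free variables of step below m are parameters. *)
Definition fIterate step n p m := locked (FExists m (FExists m.+1
  (FAnd (fFirstRow m p m.+2) (FAnd (fLengthColumn m m.+1 m.+2) (FAnd (fRowColumn n m.+1 m.+2)
   (FForall m.+2 (FForall m.+3 (FForall m.+4 (FForall m.+5
     (FImp (fColumnSucc m.+2 m.+3 m.+6) (FImp (FNot (fIsEmpty m.+2 m.+6))
     (FImp (fPartAt m m.+2 m.+4 m.+6) (FImp (fPartAt m m.+3 m.+5 m.+6)
     (FImp (FNot (fIsEmpty m.+4 m.+6)) step)))))))))))))).

Section Iterate.
Variables (g : nat -> nat) (step : formula) (e : env) (m : nat).
Hypothesis g_inflationary : forall v, v < g v.
Hypothesis step_graph : forall e' : env, (forall i, i < m -> e' i = e i) ->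
  sat e' step <->
  [/\ part (e' m.+5) 1 = 0, part (e' m.+4) 1 = 0 & part (e' m.+4) 0 = g (part (e' m.+5) 0)].

Lemma iter_ge k : k <= iter k g 0.
Proof. by elim: k => //= k IH; have := g_inflationary (iter k g 0); lia. Qed.

Lemma iter_mono : {homo (fun k => iter k g 0) : k l / k <= l}.
Proof. by apply: homo_leq => [//|y x z|k /=]; [exact: leq_trans | exact: ltnW]. Qed.

Lemma iterates_backwards (x : ipartition) :
  (forall j, part x j <> 0 -> part x j = g (part x j.+1)) -> part x 0 = iter (size x) g 0.
Proof.
move=> rec; suff from_end k : k <= size x -> part x (size x - k) = iter k g 0.
  by have := from_end (size x) (leqnn _); rewrite subnn.
elim: k => [|k IH] Hk; first by rewrite subn0 /part nth_default.
have Hj : part x (size x - k.+1) <> 0 by have := part_gt0 x (size x - k.+1); lia.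
rewrite (rec _ Hj); have -> : (size x - k.+1).+1 = size x - k by lia.
by rewrite IH //; lia.
Qed.

Lemma iterates_exist L :
  exists2 x : ipartition, forall i, part x i = iter (L - i) g 0 & size x = L.
Proof.
have [x Hx] : exists x : ipartition, forall i, part x i = iter (L - i) g 0.
  apply: (@partition_of_fun (fun i => iter (L - i) g 0) L) => i.
  + by move=> Hi; have := iter_ge (L - i); lia.
  + by move=> Hi; have -> : L - i = 0 by lia.
  + by apply: iter_mono; lia.
exists x => //; apply: size_of => i; rewrite Hx; case: (ltnP i L) => Hi.
+ by have := iter_ge (L - i); lia.
+ by have -> : L - i = 0 by lia.
Qed.

Lemma sat_Iterate n p : n < m -> p < m ->
  sat e (fIterate step n p m) <->
  [/\ part (e n) 1 = 0, part (e p) 1 = 0 & part (e p) 0 = iter (part (e n) 0) g 0].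
Proof.
(* the witnesses live in variables m, ..., m+5 and keep the parameters *)
have agree6 x C D D' R S : forall i, i < m ->
    update (update (update (update (update (update e m x) m.+1 C) m.+2 D) m.+3 D') m.+4 R)
      m.+5 S i = e i.
  by move=> i Hi; upd.
move=> Hn Hp; rewrite /fIterate -lock /=; split.
- move=> [x [C]]; rewrite sat_FirstRow // sat_LengthColumn // sat_RowColumn //; upd.
  move=> [[Rp Hf] [[CC SC] [[Rn _ SCn] H]]].
  have rec j : part x j <> 0 -> part x j = g (part x j.+1).
    move=> Hj.
    have [D HD] := column_exists j.+1; have [D' HD'] := column_exists j.+2.
    have [R HR] := row_exists (part x j); have [S HS] := row_exists (part x j.+1).
    have := H D D' R S; rewrite sat_ColumnSucc // !sat_IsEmpty // !sat_PartAt //; upd;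
      rewrite ?(size_column HD) ?(size_column HD') //.
    rewrite step_graph; last exact: agree6.
    upd; rewrite !HD !HD' !HR !HS /=.
    by move=> H'; have [_ _ ->] := H' (And3 isT isT erefl) ltac:(done) (conj erefl erefl)
        (conj erefl erefl) Hj.
  by rewrite Hf (iterates_backwards rec) -SC SCn.
- move=> [Rn Rp Hs]; set L := part (e n) 0.
  have [x Hx Sx] := iterates_exist L.
  have [C HC] := column_exists L; have SC := size_column HC.
  exists x, C; rewrite sat_FirstRow // sat_LengthColumn // sat_RowColumn //; upd.
  split; first by rewrite Hx Hs subn0.
  split; first by rewrite HC SC Sx; split => //; lia.
  split; first by rewrite HC SC; split => //; lia.
  move=> D D' R S; rewrite sat_ColumnSucc // !sat_IsEmpty //; upd => -[CD CD' SD] ZD.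
  have PD : 0 < size D by have := part_gt0 D 0; lia.
  rewrite !sat_PartAt //; upd; rewrite ?SD //= => -[RR HR] [RS HS] ZR.
  rewrite step_graph; last exact: agree6.
  upd; split => //.
  move: HR HS; rewrite !Hx => HR HS.
  have E : L - (size D).-1 = (L - size D).+1.
    case: (ltnP (size D).-1 L) => H1; first lia.
    by exfalso; apply: ZR; rewrite -HR; have -> : L - (size D).-1 = 0 by lia.
  by rewrite -HR -HS E.
Qed.
End Iterate.

(* Multiplication of rows: c = a * b, by iterating v |-> a + v, for a > 0. *)
Definition fMul a b c m := locked (FAnd (fIsRow a) (FAnd (FNot (fIsEmpty a m))
  (fIterate (fAdd a m.+5 m.+4 m.+6) b c m))).
Lemma sat_Mul (e : env) a b c m : a < m -> b < m -> c < m ->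
  sat e (fMul a b c m) <->
  [/\ part (e a) 1 = 0, 0 < part (e a) 0, part (e b) 1 = 0, part (e c) 1 = 0
    & part (e c) 0 = part (e a) 0 * part (e b) 0].
Proof.
move=> Ha Hb Hc; rewrite /fMul -lock /= sat_IsRow sat_IsEmpty //.
have graph_add (Ra : part (e a) 1 = 0) (e' : env) : (forall i, i < m -> e' i = e i) ->
    sat e' (fAdd a m.+5 m.+4 m.+6) <-> [/\ part (e' m.+5) 1 = 0, part (e' m.+4) 1 = 0
       & part (e' m.+4) 0 = addn (part (e a) 0) (part (e' m.+5) 0)].
  by move=> agree; rewrite sat_Add // agree //; split => [[] | [] *]; split.
have iterate (Ra : part (e a) 1 = 0) (Pa : 0 < part (e a) 0) :=
  @sat_Iterate (addn (part (e a) 0)) _ e m ltac:(move=> v; lia) (graph_add Ra) b c Hb Hc.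
split.
- move=> [Ra [Za]]; have Pa : 0 < part (e a) 0 by lia.
  by rewrite (iterate Ra Pa) iter_addn_0 => -[Rb Rc ->]; split => //; lia.
- move=> [Ra Pa Rb Rc Hs]; do 2 (split; first lia).
  by rewrite (iterate Ra Pa) iter_addn_0.
Qed.

(* The row p is a prime: it is not a column, and in every factorisation
   p = a * b into rows one factor is a column, i.e. [1]. *)
Definition fPrime p m := locked (FAnd (fIsRow p) (FAnd (FNot (fIsColumn p m))
  (FForall m (FForall m.+1 (FImp (fMul m m.+1 p m.+2)
    (FOr (fIsColumn m m.+2) (fIsColumn m.+1 m.+2))))))).
Lemma sat_Prime (e : env) p m : p < m ->
  sat e (fPrime p m) <-> part (e p) 1 = 0 /\ prime (part (e p) 0).
Proof.
move=> Hp; rewrite /fPrime -lock /= sat_IsRow sat_IsColumn //; split.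
- move=> [Rp [Cp H]]; split => //; apply/primeP; split; first lia.
  move=> d /dvdnP [k Hk].
  have Pd : 0 < d by move: Hk; case: d => //; lia.
  have [A HA] := row_exists d; have [B HB] := row_exists k.
  have := H A B; rewrite sat_Mul // !sat_IsColumn //; upd; rewrite !HA !HB /=.
  have E : part (e p) 0 = d * k by rewrite Hk mulnC.
  move=> /(_ (And5 erefl Pd erefl Rp E)) [H1|H1]; apply/orP; [left | right]; apply/eqP.
  + lia.
  + have K : k = 1 by move: Hk Cp H1; clear; case: k => [|[|]] //=; lia.
    by rewrite Hk K mul1n.
- move=> [Rp Pp]; have P2 := prime_gt1 Pp; split => //; split; first lia.
  move=> A B; rewrite sat_Mul // !sat_IsColumn //; upd => -[RA PA RB _ Hs].
  have Hdv : part A 0 %| part (e p) 0 by rewrite Hs dvdn_mulr.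
  case/primeP: Pp => _ Hd; have /orP [/eqP H1|/eqP H1] := Hd _ Hdv; [left; lia | right].
  by rewrite H1 in Hs; nia.
Qed.

Lemma next_primeP n : [/\ n < next_prime n, prime (next_prime n) &
   forall p, n < p -> prime p -> next_prime n <= p].
Proof.
rewrite /next_prime; case: ex_minnP => q /andP [H1 H2] H3; split => // p Hp Pp.
by apply: H3; rewrite Hp Pp.
Qed.

Definition fNextPrime p q m := locked (FAnd (fIsRow p) (FAnd (fPrime q m)
  (FAnd (fLe p q) (FAnd (FNot (fLe q p))
  (FForall m (FImp (fPrime m m.+1) (FImp (fLe p m) (FImp (FNot (fLe m p)) (fLe q m))))))))).
Lemma sat_NextPrime (e : env) p q m : p < m -> q < m ->
  sat e (fNextPrime p q m) <->
  [/\ part (e p) 1 = 0, part (e q) 1 = 0 & part (e q) 0 = next_prime (part (e p) 0)].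
Proof.
move=> Hp Hq; rewrite /fNextPrime -lock /= sat_IsRow sat_Prime // !sat_Le.
have [gt_next prime_next least_next] := next_primeP (part (e p) 0); split.
- move=> [Rp [[Rq Pq] [Hpq [Hqp H]]]]; rewrite (le_row _ Rp) in Hpq.
  rewrite (le_row _ Rq) in Hqp.
  have [R HR] := row_exists (next_prime (part (e p) 0)); have RR : part R 1 = 0 by rewrite HR.
  have HR0 : part R 0 = next_prime (part (e p) 0) by rewrite HR.
  have := H R; rewrite sat_Prime // !sat_Le; upd.
  rewrite (le_row _ Rp) (le_row _ RR) (le_row _ Rq) HR0.
  move=> /(_ (conj RR prime_next) (ltnW gt_next)) H4; split => //.
  by have := H4 ltac:(lia); have := least_next (part (e q) 0) ltac:(lia) Pq; lia.
- move=> [Rp Rq Hs]; rewrite (le_row _ Rp) (le_row _ Rq).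
  do 4 (split; first by rewrite ?Hs; lia).
  move=> r; rewrite sat_Prime // !sat_Le; upd => -[Rr Pr].
  rewrite (le_row _ Rp) (le_row _ Rr) (le_row _ Rq) Hs => _ Hrp.
  by apply: least_next => //; lia.
Qed.

Lemma nth_primeE k : 0 < k -> nth_prime k = iter k next_prime 0.
Proof.
have next01 : next_prime 1 = next_prime 0.
  have [A B C] := next_primeP 0; have [A' B' C'] := next_primeP 1.
  by have := C 2 isT isT; have := C' 2 isT isT; have := prime_gt1 B; have := prime_gt1 B'; lia.
elim: k => // -[|k] IH _ /=; first by rewrite next01.
by rewrite /= in IH; rewrite IH.
Qed.

(* p = [p_n] for the row n (and p = [0] for n = 0). *)
Definition fNthPrime n p m := locked (fIterate (fNextPrime m.+5 m.+4 m.+6) n p m).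
Lemma sat_NthPrime (e : env) n p m : n < m -> p < m ->
  sat e (fNthPrime n p m) <->
  [/\ part (e n) 1 = 0, part (e p) 1 = 0 & part (e p) 0 = iter (part (e n) 0) next_prime 0].
Proof.
move=> Hn Hp; rewrite /fNthPrime -lock (sat_Iterate (g := next_prime)) //.
- by move=> v; have [] := next_primeP v.
- by move=> e' _; rewrite sat_NextPrime.
Qed.

Lemma nth_prime_gt0 k : 0 < nth_prime k.
Proof.
case: k => // k; rewrite nth_primeE //; have [_ P _] := next_primeP (iter k next_prime 0).
exact: prime_gt0.
Qed.

Lemma product_of_recurrence (t : seq nat) (W : nat -> nat) : 0 < size t ->
  (forall j, j < size t ->
     W j = nth_prime (nth 0 t j) * (if j.+1 < size t then W j.+1 else 1)) ->
  W 0 = \prod_(x <- t) nth_prime x.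
Proof.
elim: t W => // a t IH W _ rec; rewrite big_cons (rec 0) //=.
case: t IH rec => [|b t] IH rec; first by rewrite big_nil.
congr (_ * _); apply: (IH (fun j => W j.+1)) => // j Hj.
exact: (rec j.+1).
Qed.

Definition suffix_product (t : seq nat) j := \prod_(x <- drop j t) nth_prime x.

Lemma suffix_product_gt0 t j : 0 < suffix_product t j.
Proof. by apply: prodn_gt0 => i; exact: nth_prime_gt0. Qed.

Lemma suffix_product_step t j : j < size t ->
  suffix_product t j = nth_prime (nth 0 t j) * suffix_product t j.+1.
Proof. by move=> Hj; rewrite /suffix_product (drop_nth 0 Hj) big_cons. Qed.

Lemma suffix_products_exist (t : ipartition) : exists x : ipartition,
  forall i, part x i = if i < size t then suffix_product t i else 0.
Proof.
apply: (@partition_of_fun (fun i => if i < size t then suffix_product t i else 0) (size t)) => i.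
- by move=> ->; apply: suffix_product_gt0.
- by rewrite ltnNge => ->.
- case: (ltnP i.+1 (size t)) => Hi //; rewrite ifT; last lia.
  rewrite (suffix_product_step (j := i)); last lia.
  by have := nth_prime_gt0 (nth 0 t i); nia.
Qed.

(* For each
   index j (columns m, m+1 of lengths j+1, j+2) with t_j = [m+4] nonzero,
   W_j = [m+2], W_(j+1) = [m+3] and [m+5] = [p_(t_j)]: either W_(j+1) is
   empty and W_j = p_(t_j), or W_j = p_(t_j) * W_(j+1). *)
Definition fProductStep t W m := locked (FForall m (FForall m.+1 (FForall m.+2
  (FForall m.+3 (FForall m.+4 (FForall m.+5
  (FImp (fColumnSucc m m.+1 m.+6) (FImp (FNot (fIsEmpty m m.+6))
  (FImp (fPartAt t m m.+4 m.+6) (FImp (fPartAt W m m.+2 m.+6) (FImp (fPartAt W m.+1 m.+3 m.+6)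
  (FImp (FNot (fIsEmpty m.+4 m.+6)) (FImp (fNthPrime m.+4 m.+5 m.+6)
    (FAnd (FImp (fIsEmpty m.+3 m.+6) (FAnd (fLe m.+2 m.+5) (fLe m.+5 m.+2)))
          (FImp (FNot (fIsEmpty m.+3 m.+6)) (fMul m.+5 m.+3 m.+2 m.+6)))))))))))))))).
Lemma sat_ProductStep (e : env) t W m : t < m -> W < m -> size (e W) = size (e t) ->
  sat e (fProductStep t W m) <-> forall j, j < size (e t) ->
    part (e W) j = nth_prime (part (e t) j) * (if j.+1 < size (e t) then part (e W) j.+1 else 1).
Proof.
move=> Ht HW SW; rewrite /fProductStep -lock /=; split.
- move=> H j Hj.
  have [D HD] := column_exists j.+1; have [D' HD'] := column_exists j.+2.
  have [R HR] := row_exists (part (e W) j); have [S HS] := row_exists (part (e W) j.+1).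
  have [T HT] := row_exists (part (e t) j); have [Q HQ] := row_exists (nth_prime (part (e t) j)).
  have Tp : 0 < part (e t) j by rewrite part_gt0.
  have := H D D' R S T Q; rewrite sat_ColumnSucc // !sat_IsEmpty // !sat_PartAt //; upd;
    rewrite ?(size_column HD) ?(size_column HD') //.
  rewrite sat_NthPrime // !sat_Le sat_Mul //; upd; rewrite !HD !HD' !HR !HS !HT !HQ /=.
  have Tn : part (e t) j <> 0 by lia.
  move=> /(_ (And3 isT isT erefl) ltac:(done) (conj erefl erefl) (conj erefl erefl)
    (conj erefl erefl) Tn (And3 erefl erefl (nth_primeE Tp))) [last_step inner_step].
  case: (ltnP j.+1 (size (e t))) => Hj1.
  + have Sp : 0 < part (e W) j.+1 by rewrite part_gt0 SW.
    by have [_ _ _ _ ->] := inner_step ltac:(lia); lia.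
  + have S0 : part (e W) j.+1 = 0 by apply/eqP; rewrite -leqn0 leqNgt part_gt0 SW; lia.
    have [A1 A2] := last_step S0.
    by have := A1 0; have := A2 0; rewrite !HR !HQ /=; lia.
- move=> rec D D' R S T Q; rewrite sat_ColumnSucc // !sat_IsEmpty //; upd => -[CD CD' SD] ZD.
  have PD : 0 < size D by have := part_gt0 D 0; lia.
  rewrite !sat_PartAt //; upd; rewrite ?SD //= => -[RT HT] [RR HR] [RS HS] ZT.
  rewrite sat_NthPrime //; upd => -[_ RQ HQ].
  rewrite !sat_Le sat_Mul //; upd.
  have Hj : (size D).-1 < size (e t) by rewrite -part_gt0; lia.
  have {}HQ : part Q 0 = nth_prime (part (e t) (size D).-1) by rewrite HQ -HT nth_primeE //; lia.
  have := rec _ Hj; rewrite -HQ HR; have -> : (size D).-1.+1 = size D by lia.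
  case: ifP => Hs E; split => S0.
  + by have := part_gt0 (e W) (size D); rewrite SW Hs HS S0.
  + by split => //; [rewrite HQ nth_prime_gt0 | rewrite E HS].
  + by rewrite (le_row _ RR) (le_row _ RQ) E muln1; split.
  + by have := part_gt0 (e W) (size D); rewrite SW Hs HS; lia.
Qed.

(* w = [prod_(x in t) p_x]: w is the first part of a sequence W of the
   length of t following the recurrence, or [1] if t is empty. *)
Definition fPrimeProduct t w m := locked (FExists m (FExists m.+1
  (FAnd (fLengthColumn m m.+1 m.+2) (FAnd (fLengthColumn t m.+1 m.+2)
  (FAnd (FImp (fIsEmpty t m.+2)
          (FAnd (fIsColumn w m.+2) (FAnd (FNot (fIsEmpty w m.+2)) (fIsRow w))))
  (FAnd (FImp (FNot (fIsEmpty t m.+2)) (fFirstRow m w m.+2))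
        (fProductStep t m m.+2))))))).
Lemma sat_PrimeProduct (e : env) t w m : t < m -> w < m ->
  sat e (fPrimeProduct t w m) <->
  part (e w) 1 = 0 /\ part (e w) 0 = \prod_(x <- e t) nth_prime x.
Proof.
move=> Ht Hw; rewrite /fPrimeProduct -lock /=; split.
- move=> [W [C]]; rewrite !sat_LengthColumn // !sat_IsEmpty // sat_IsColumn //.
  rewrite sat_IsRow sat_FirstRow //; upd.
  move=> [[CC SCW] [[_ SCt] [empty_t [nonempty_t Hstep]]]].
  have SW : size W = size (e t) by rewrite -SCW SCt.
  move: Hstep; rewrite sat_ProductStep //; upd; last exact: SW.
  move=> rec.
  case: (posnP (part (e t) 0)) => Zt.
  + have [C1 [Z1 R1]] := empty_t Zt.
    have St : size (e t) = 0 by have := part_gt0 (e t) 0; lia.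
    by rewrite (size0nil St) big_nil; split => //; lia.
  + have [Rw ->] := nonempty_t ltac:(lia); split => //.
    by apply: (product_of_recurrence (W := part W)); rewrite -?part_gt0.
- move=> [Rw Hs].
  have [W HW] := suffix_products_exist (e t).
  have [C HC] := column_exists (size (e t)); have SC := size_column HC.
  have SW : size W = size (e t).
    by apply: size_of => i; rewrite HW; case: ifP => // _; rewrite suffix_product_gt0.
  exists W, C; rewrite !sat_LengthColumn // !sat_IsEmpty // sat_IsColumn //.
  rewrite sat_IsRow sat_FirstRow // sat_ProductStep //; upd; last exact: SW.
  have CC : part C 0 <= 1 by rewrite HC; lia.
  do 2 (split; first by rewrite SC ?SW).
  split.
    move=> Zt; have St : size (e t) = 0 by have := part_gt0 (e t) 0; lia.
    by move: Hs; rewrite (size0nil St) big_nil => ->.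
  split.
    move=> Zt; split => //; rewrite HW Hs; have -> : 0 < size (e t) by rewrite -part_gt0; lia.
    by rewrite /suffix_product drop0.
  move=> j Hj; rewrite !HW Hj (suffix_product_step Hj).
  case: ifP => Hj1; first by rewrite Hj1.
  have -> : j.+1 = size (e t) by lia.
  by rewrite /suffix_product drop_size big_nil.
Qed.

Lemma prime_product_column (x : ipartition) : part x 0 <= 1 ->
  \prod_(y <- parts x) nth_prime y = 2 ^ size x.
Proof.
move=> Cx; have p1 : nth_prime 1 = 2.
  have [_ P least] := next_primeP 1; have := least 2 isT isT; have := prime_gt1 P.
  by rewrite /=; lia.
rewrite (eq_big_seq (fun _ => 2)); first by rewrite big_const_seq count_predT iter_muln_1.
move=> y /(nthP 0) [i Hi <-]; have := @part_column x i Cx; rewrite /part Hi => ->.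
exact: p1.
Qed.

(* w = [2^(size x - 1)] for a nonempty column x: w is the product of the
   p_y over the column one shorter than x. *)
Definition fColumnCode x w m := locked (FExists m (FAnd (fColumnSucc m x m.+1)
  (fPrimeProduct m w m.+1))).
Lemma sat_ColumnCode (e : env) x w m : x < m -> w < m ->
  sat e (fColumnCode x w m) <->
  [/\ 0 < part (e x) 0 <= 1, part (e w) 1 = 0 & part (e w) 0 = 2 ^ (size (e x)).-1].
Proof.
move=> Hx Hw; rewrite /fColumnCode -lock /=; split.
- move=> [t]; rewrite sat_ColumnSucc // sat_PrimeProduct //; upd.
  move=> [[Ct Cx Sx] [Rw ->]]; rewrite prime_product_column // Sx.
  by have := part_gt0 (e x) 0; rewrite Sx; split => //; lia.
- move=> [Cx Rw Hs]; have [t Ht] := column_exists (size (e x)).-1; exists t.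
  have St := size_column Ht; have Ct : part t 0 <= 1 by rewrite Ht; lia.
  rewrite sat_ColumnSucc // sat_PrimeProduct //; upd; rewrite prime_product_column // St.
  by have := part_gt0 (e x) 0; split => //; split => //; lia.
Qed.

Lemma hashE (s : ipartition) : hash s =
  if part s 0 == 0 then 0
  else if part s 0 == 1 then 2 ^ (size s).-1 else \prod_(x <- s) nth_prime x.
Proof.
case: s => s Hs; rewrite /hash /part /=; case: s Hs => [|a l] Hs //.
case/andP: (Hs) => _ /allP pos.
have a_max y : y \in a :: l -> y <= a.
  move=> /(nthP 0) [i Hi <-].
  by have := part_mono (IPartition Hs) (leq0n i); rewrite /part.
have ones : all (fun x => x == 1) (a :: l) = (a == 1).
  apply/allP/eqP => [H | a1 y Hy]; first exact/eqP/H/mem_head.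
  by have := a_max y Hy; have := pos y Hy; rewrite a1; lia.
have a_gt0 : 0 < a by apply/pos/mem_head.
by rewrite ones eqn0Ngt a_gt0 /=; case: (a == 1).
Qed.

Lemma parts_single (x : ipartition) v : parts x = single v <-> part x 1 = 0 /\ part x 0 = v.
Proof.
split; first by rewrite /part => ->; case: v.
move=> [H1 H0]; have Sx : size x = (0 < v).
  apply: size_of => -[|[|i]]; first by rewrite H0; case: (v).
  - by rewrite H1; case: (0 < v).
  - by rewrite part_row //; case: (0 < v).
by move: H0 Sx; rewrite /part; case: (parts x) => [|a [|b l]] <- //=; case: a.
Qed.

Definition Psi_tran := FOr (FAnd (fIsEmpty 0 2) (fIsEmpty 1 2))
  (FOr (fColumnCode 0 1 2) (FAnd (FNot (fIsColumn 0 2)) (fPrimeProduct 0 1 2))).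

Lemma sat_Psi_tran (e : env) : sat e Psi_tran <-> parts (e 1) = single (hash (e 0)).
Proof.
rewrite /Psi_tran /= !sat_IsEmpty // sat_IsColumn // sat_ColumnCode // sat_PrimeProduct //.
rewrite parts_single hashE.
have empty1 : part (e 1) 0 = 0 -> part (e 1) 1 = 0 by have := part_mono (e 1) (leq0n 1); lia.
case: (ltngtP (part (e 0) 0) 1) => [lt01 | gt01 | eq01].
- have -> : part (e 0) 0 = 0 by lia.
  split => [[[_ E] | [[] | [] //]] | [_ E]] //=; first by split => //; apply: empty1.
  by left.
- rewrite !ifN ?eqn0Ngt ?(ltn_eqF gt01) ?(ltnW gt01) //.
  by split => [[[] | [[] | []]] | ?]; try lia.
- rewrite eq01 /=; split => [[[] | [[] ? ? | []]] | [? ?]] //.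
  by right; left.
Qed.

Theorem proposition4p3 :
  exists Psi : formula,
    forall (sigma pi : ipartition) (e : env),
      e 0 = sigma -> e 1 = pi ->
      (sat e Psi <-> (pi : seq nat) = single (hash sigma)).
Proof. by exists Psi_tran => sigma pi e <- <-; exact: sat_Psi_tran. Qed.
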